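(* Let $p\geq 2$ be an even integer and let $U_p=\bigcup_{n\in 2\mathbb Z_+}\mathbb Z_p^n$. Let $\boldsymbol a,\boldsymbol b\in U_p$ be equivalent (in the sense defined in the context). Then $\mu_p(\boldsymbol a)=\mu_p(\boldsymbol b)$.
   Context: $\mathbb Z_+$ denotes the positive integers and $\mathbb Z_p=\mathbb Z/p\mathbb Z$. Two elements of $U_p$ are called equivalent if they are related by a finite sequence of the following transformations of $(a_1,\ldots,a_n)\in\mathbb Z_p^n$ ($n$ even): (Op1) $(a_1,\ldots,a_n)\to(a_2,\ldots,a_n,a_1)$; (Op2) $(a_1,\ldots,a_n)\to(a, a_2+(-1)^2(a_1-a),\ldots,a_i+(-1)^i(a_1-a),\ldots,a_n+(-1)^n(a_1-a))$ for any $a\in\mathbb Z_p$; (Op3) $(a_1,\ldots,a_n)\to(a, a_1-a_2+a,\ldots,a_1-a_i+a,\ldots,a_1-a_n+a)$ for any $a\in\mathbb Z_p$; (Op4) $(a_1,\ldots,a_n)\to(a_1,-a_1+a_2+a_3,a_3,\ldots,a_n)$ when $n>3$. For $p$ even, parity of elements of $\mathbb Z_p$ is well defined. For a tuple $(b_1,\ldots,b_n)$ of elements of $\mathbb Z_p$, let $E(b_1,\ldots,b_n)=\#\{i\in\{1,\ldots,n\}: b_i\equiv 0\pmod 2\}$ and $O(b_1,\ldots,b_n)=\#\{i: b_i\equiv 1\pmod 2\}$. Define $\mu_p:U_p\to\mathbb Z$ by $\mu_p(a_1,\ldots,a_n)=E(a_1+a_2,a_2+a_3,\ldots,a_n+a_1)-O(a_1+a_2,a_2+a_3,\ldots,a_n+a_1)$.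 *)

From HB Require Import structures.
From mathcomp Require Import all_boot all_order all_algebra.
From Stdlib Require Import Relation_Operators.
Set Implicit Arguments. Unset Strict Implicit. Unset Printing Implicit Defensive.
Import GRing.Theory Num.Theory.
Local Open Scope ring_scope.

(* Tuples (a_1,...,a_n) are sequences s with a_i = nth 0 s (i-1). *)

Definition inU (p : nat) (s : seq 'Z_p) : bool :=
  (0 < size s)%N && ~~ odd (size s).

Definition op1 (p : nat) (s : seq 'Z_p) : seq 'Z_p := rot 1 s.

(* Op2: a_i -> a_i + (-1)^i (a_1 - a), i = 1..n (the i=1 entry becomes a) *)
Definition op2 (p : nat) (a : 'Z_p) (s : seq 'Z_p) : seq 'Z_p :=
  mkseq (fun i => nth 0 s i + (-1) ^+ i.+1 * (nth 0 s 0 - a)) (size s).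

Definition op3 (p : nat) (a : 'Z_p) (s : seq 'Z_p) : seq 'Z_p :=
  mkseq (fun i => nth 0 s 0 - nth 0 s i + a) (size s).

Definition op4 (p : nat) (s : seq 'Z_p) : seq 'Z_p :=
  match s with
  | a1 :: a2 :: a3 :: t => a1 :: (- a1 + a2 + a3) :: a3 :: t
  | _ => s
  end.

Definition step (p : nat) (s t : seq 'Z_p) : Prop :=
  inU s /\
  [\/ t = op1 s,
      exists a, t = op2 a s,
      exists a, t = op3 a s
    | (3 < size s)%N /\ t = op4 s].

Definition equivU (p : nat) : seq 'Z_p -> seq 'Z_p -> Prop :=
  clos_refl_sym_trans (seq 'Z_p) (@step p).

(* parity of an element of Z_p (well defined since p is even) *)
Definition oddZp (p : nat) (x : 'Z_p) : bool := odd (val x).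

Definition cyc_sums (p : nat) (s : seq 'Z_p) : seq 'Z_p :=
  [seq xy.1 + xy.2 | xy <- zip s (rot 1 s)].

Definition mu (p : nat) (s : seq 'Z_p) : int :=
  (count (fun x => ~~ oddZp x) (cyc_sums s))%:Z
  - (count (@oddZp p) (cyc_sums s))%:Z.

(* [mu] only depends on the multiset of parities of the cyclic neighbour sums
   a_i + a_(i+1).  As p is even, parity is an additive map Z_p -> Z/2, and each
   operation preserves that multiset: Op1 rotates the sums; Op2 leaves them
   unchanged, because on a cycle of even length consecutive signs (-1)^i and
   (-1)^(i+1) always cancel; Op3 replaces every sum x by 2(a_1 + a) - x, of the
   same parity; Op4 turns the first two sums a_1 + a_2, a_2 + a_3 into
   a_2 + a_3 and a_2 + 2 a_3 - a_1, i.e. swaps their parities. *)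
From mathcomp Require Import all_boot all_order all_algebra.
From mathcomp Require Import ring.
Set Implicit Arguments. Unset Strict Implicit. Unset Printing Implicit Defensive.
Import GRing.Theory.
Local Open Scope ring_scope.

Lemma zip_rot1 (S T : Type) (s : seq S) (t : seq T) :
  size s = size t -> zip (rot 1 s) (rot 1 t) = rot 1 (zip s t).
Proof. by case: s t => [|x s] [|y t] //= [eq_st]; rewrite !rot1_cons zip_rcons. Qed.

Section CyclicSums.

Variable p : nat.

Definition parities (s : seq 'Z_p) : seq bool := map (@oddZp p) (cyc_sums s).

Lemma muE (s : seq 'Z_p) :
  mu s = (count negb (parities s))%:Z - (count id (parities s))%:Z.
Proof. by rewrite /mu !count_map. Qed.

Lemma perm_parities_mu (s t : seq 'Z_p) :
  perm_eq (parities s) (parities t) -> mu s = mu t.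
Proof. by move=> /permP st; rewrite !muE !st. Qed.

Lemma size_cyc_sums (s : seq 'Z_p) : size (cyc_sums s) = size s.
Proof. by rewrite size_map size_zip size_rot minnn. Qed.

Lemma nth_cyc_sums (s : seq 'Z_p) i : (i < size s)%N ->
  nth 0 (cyc_sums s) i = nth 0 s i + nth 0 s (i.+1 %% size s).
Proof.
case: s => [|x t] // lt_i_s.
rewrite (nth_map (0, 0)) ?size_zip ?size_rot ?minnn // nth_zip ?size_rot //=.
rewrite rot1_cons nth_rcons; have [lt_i_t|] := ltnP i (size t).
  by rewrite modn_small.
by rewrite leq_eqVlt ltnNge -ltnS lt_i_s orbF => /eqP <-; rewrite eqxx modnn.
Qed.

Lemma cyc_sums_rot1 (s : seq 'Z_p) :
  cyc_sums (rot 1 s) = rot 1 (cyc_sums s).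
Proof. by rewrite /cyc_sums zip_rot1 ?size_rot // map_rot. Qed.

Lemma mu_op1 (s : seq 'Z_p) : mu (op1 s) = mu s.
Proof.
by apply: perm_parities_mu; rewrite /parities cyc_sums_rot1 map_rot perm_rot.
Qed.

Lemma cyc_sums_op2 (a : 'Z_p) (s : seq 'Z_p) :
  ~~ odd (size s) -> cyc_sums (op2 a s) = cyc_sums s.
Proof.
move=> s_even; have size_op2 : size (op2 a s) = size s by rewrite size_mkseq.
apply: (@eq_from_nth _ 0); rewrite !size_cyc_sums // size_op2 => i lt_i_s.
have lt_next : (i.+1 %% size s < size s)%N by rewrite ltn_mod (leq_ltn_trans _ lt_i_s).
rewrite !nth_cyc_sums ?size_op2 // !nth_mkseq // addrACA -mulrDl.
have odd_next : odd (i.+1 %% size s) = ~~ odd i by rewrite odd_mod ?(negbTE s_even).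
rewrite -signr_odd -[(-1) ^+ (_ %% _).+1]signr_odd /= odd_next negbK.
by case: (odd i); rewrite ?expr0 ?expr1 (addrN, addNr) mul0r addr0.
Qed.

Lemma mu_op2 (a : 'Z_p) (s : seq 'Z_p) :
  ~~ odd (size s) -> mu (op2 a s) = mu s.
Proof. by move=> s_even; rewrite /mu cyc_sums_op2. Qed.

Lemma cyc_sums_op3 (a : 'Z_p) (s : seq 'Z_p) :
  cyc_sums (op3 a s) = [seq (nth 0 s 0 + a) *+ 2 - x | x <- cyc_sums s].
Proof.
have size_op3 : size (op3 a s) = size s by rewrite size_mkseq.
apply: (@eq_from_nth _ 0) => [|i]; first by rewrite (size_map _ (cyc_sums s)) !size_cyc_sums.
rewrite size_cyc_sums size_op3 => lt_i_s.
have lt_next : (i.+1 %% size s < size s)%N by rewrite ltn_mod (leq_ltn_trans _ lt_i_s).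
rewrite nth_cyc_sums ?size_op3 // !nth_mkseq //.
rewrite (nth_map 0) ?size_cyc_sums // nth_cyc_sums //.
by ring.
Qed.

Hypothesis p_even : ~~ odd p.

(* For p = 0 the type ['Z_p] is ['Z_2], whose modulus is still even. *)
Lemma Zp_modulus_even : ~~ odd (Zp_trunc p).+2.
Proof. by case: p p_even => [|[|m]]. Qed.

Lemma oddZpD (x y : 'Z_p) : oddZp (x + y) = oddZp x (+) oddZp y.
Proof. by rewrite /oddZp /= odd_mod ?oddD // (negbTE Zp_modulus_even). Qed.

Lemma oddZpN (x : 'Z_p) : oddZp (- x) = oddZp x.
Proof.
by rewrite /oddZp /= odd_mod ?oddB ?(negbTE Zp_modulus_even) // ltnW.
Qed.

Lemma oddZp_double_sub (c x : 'Z_p) : oddZp (c *+ 2 - x) = oddZp x.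
Proof. by rewrite oddZpD oddZpN oddZpD addbb. Qed.

Lemma mu_op3 (a : 'Z_p) (s : seq 'Z_p) : mu (op3 a s) = mu s.
Proof.
apply: perm_parities_mu.
by rewrite /parities cyc_sums_op3 -map_comp (eq_map (oddZp_double_sub _)).
Qed.

Lemma mu_op4 (s : seq 'Z_p) : (3 < size s)%N -> mu (op4 s) = mu s.
Proof.
case: s => [|a1 [|a2 [|a3 [|a4 t]]]] // _; apply: perm_parities_mu.
rewrite /parities /cyc_sums /op4 !rot1_cons /=.
have -> : oddZp (a1 + (- a1 + a2 + a3)) = oddZp (a2 + a3).
  by rewrite !(oddZpD, oddZpN) !addbA addbb.
have -> : oddZp (- a1 + a2 + a3 + a3) = oddZp (a1 + a2).
  by rewrite !(oddZpD, oddZpN) -addbA addbb addbF.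
by rewrite (perm_catCA [:: _] [:: _]).
Qed.

Lemma mu_step (s t : seq 'Z_p) : step s t -> mu t = mu s.
Proof.
move=> [/andP[_ s_even]] [->|[a ->]|[a ->]|[size_gt3 ->]].
- exact: mu_op1.
- exact: mu_op2.
- exact: mu_op3.
- exact: mu_op4.
Qed.

End CyclicSums.

Theorem mainTheorem3 (p : nat) (hp : (2 <= p)%N) (hpe : ~~ odd p)
  (a b : seq 'Z_p) (ha : inU a) (hb : inU b) (hab : equivU a b) :
  mu a = mu b.
Proof.
by elim: hab => [s t /(mu_step hpe) ->|//|s t _ ->|s t u _ -> _ ->].
Qed.
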